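(* Let $\mathbb{X}\subseteq\mathbb{R}^{n_x}$, $\mathbb{U}\subseteq\mathbb{R}^{n_u}$ with $0<\mu_L(\mathbb{U})<\infty$ ($\mu_L$ = Lebesgue measure), let $T>0$ be an integer, let $p(x_0)$ be an initial density on $\mathbb{X}$ and $p(x_{t+1}\mid x_t,u_t)$, $t\in\{0,\dots,T-1\}$, transition densities, and let $c_t:\mathbb{X}\times\mathbb{U}\to\mathbb{R}_{\ge 0}$ ($t\in\{0,\dots,T-1\}$), $c_T:\mathbb{X}\to\mathbb{R}_{\ge 0}$. Let $p(\tau\mid\mathcal{O}_{0:T}=1)$ be the optimal trajectory density of control as inference, i.e. the density on trajectories $\tau=(x_{0:T},u_{0:T-1})$ satisfying $$p(\tau\mid\mathcal{O}_{0:T}=1)\propto p(x_0)\prod_{t=0}^{T-1}p(x_{t+1}\mid x_t,u_t)\,\exp\Big(-c_T(x_T)-\sum_{t=0}^{T-1}c_t(x_t,u_t)\Big).$$ For policies $\pi=\{\pi_t\}_{t=0}^{T-1}$, where each $\pi_t(\cdot\mid x)$ is a probability density on $\mathbb{U}$ for every $x\in\mathbb{X}$, let $p^\pi(\tau)=p(x_0)\prod_{t=0}^{T-1}p(x_{t+1}\mid x_t,u_t)\pi_t(u_t\mid x_t)$. Then for any $\eta>-1$, $\eta\neq 0$, minimizing the R\'enyi divergence $D_{1+\eta}(p^\pi\,\|\,p(\cdot\mid\mathcal{O}_{0:T}=1))$ with respect to $p^\pi$ of this form (i.e. with respect to $\{\pi_t\}$) is equivalent to the problem $$\underset{\{\pi_t\}_{t=0}^{T-1}}{\mathrm{minimize}}\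 \ \frac{1}{\eta}\log\mathbb{E}_{p^\pi(\tau)}\Big[\exp\Big(\eta c_T(x_T)+\eta\sum_{t=0}^{T-1}\big(c_t(x_t,u_t)+\log\pi_t(u_t\mid x_t)\big)\Big)\Big].$$
   Context: For densities $p_1,p_2$ and $\alpha>0$, $\alpha\ne1$, the R\'enyi divergence is $D_\alpha(p_1\|p_2)=\frac{1}{\alpha-1}\log\int_{\{p_1p_2>0\}}p_1(u)^\alpha p_2(u)^{1-\alpha}\,du$. In control as inference, binary optimality variables $\mathcal{O}_t$ satisfy $p(\mathcal{O}_t=1\mid x_t,u_t)=\exp(-c_t(x_t,u_t))$, $p(\mathcal{O}_T=1\mid x_T)=\exp(-c_T(x_T))$, and the control prior is uniform, $p(u_t)=1/\mu_L(\mathbb{U})$. ''Equivalent'' means the two minimization problems over $\{\pi_t\}$ have the same minimizers. *)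

From HB Require Import structures.
From mathcomp Require Import all_boot all_order all_algebra.
From mathcomp Require Import all_classical all_reals all_analysis.
Set Implicit Arguments. Unset Strict Implicit. Unset Printing Implicit Defensive.
Import Order.TTheory GRing.Theory Num.Theory.
Local Open Scope classical_set_scope.
Local Open Scope ring_scope.

Section Defs.
Context {R : realType}.

(* Lebesgue integral on R^n (points are n.-tuples) of a nonnegative
   extended-real function, as the iterated one-dimensional Lebesgue
   integral (equal to the integral w.r.t. the n-dim Lebesgue measure by
   Tonelli for nonnegative integrands). *)
Fixpoint lebint (n : nat) : (n.-tuple R -> \bar R) -> \bar R :=
  match n return (n.-tuple R -> \bar R) -> \bar R with
  | 0 => fun f => f [tuple]
  | n'.+1 => fun f =>
      (\int[@lebesgue_measure R]_x lebint (fun t => f (cons_tuple x t)))%E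
  end.

Definition lebint_on (n : nat) (A : set (n.-tuple R)) (f : n.-tuple R -> \bar R)
  : \bar R := lebint (fun v => ((\1_A v)%:E * f v)%E).

Definition lebmeasure (n : nat) (A : set (n.-tuple R)) : \bar R :=
  lebint_on A (fun _ => 1%E).

(* Integral over trajectories tau = (x_{0:t}, u_{0:t-1}): the trajectory
   (xs, us) has xs = [x_0; ...; x_t] and us = [u_0; ...; u_{t-1}];
   intX / intU integrate over the state / control space. *)
Fixpoint traj_int {S Cn : Type} (intX : (S -> \bar R) -> \bar R)
  (intU : (Cn -> \bar R) -> \bar R) (t : nat)
  (F : seq S * seq Cn -> \bar R) : \bar R :=
  match t with
  | 0 => intX (fun x => F ([:: x], [::]))
  | t'.+1 => traj_int intX intU t'
      (fun tau => intU (fun u => intX (fun x => F (rcons tau.1 x, rcons tau.2 u))))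
  end.

Definition renyi {A : Type} (I : (A -> \bar R) -> \bar R) (alpha : R)
  (p1 p2 : A -> R) : \bar R :=
  (((alpha - 1)^-1)%:E *
   lne (I (fun a => if (0 < p1 a * p2 a)%R
                    then (powR (p1 a) alpha * powR (p2 a) (1 - alpha))%:E
                    else 0%E)))%E.

Definition at_ {n : nat} (s : seq (n.-tuple R)) (t : nat) : n.-tuple R :=
  nth (nseq_tuple n 0) s t.

Definition trajectory (nx nu : nat) := (seq (nx.-tuple R) * seq (nu.-tuple R))%type.

Definition policy (nx nu : nat) := nat -> nx.-tuple R -> nu.-tuple R -> R.

Definition trajI (nx nu : nat) (X : set (nx.-tuple R)) (U : set (nu.-tuple R))
  (T : nat) : (trajectory nx nu -> \bar R) -> \bar R :=
  traj_int (lebint_on X) (lebint_on U) T.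

Definition traj_density (nx nu T : nat) (p0 : nx.-tuple R -> R)
  (ptr : nat -> nx.-tuple R -> nu.-tuple R -> nx.-tuple R -> R)
  (pi : policy nx nu) (tau : trajectory nx nu) : R :=
  p0 (at_ tau.1 0) *
  \prod_(t < T) (ptr t (at_ tau.1 t) (at_ tau.2 t) (at_ tau.1 t.+1) *
                 pi t (at_ tau.1 t) (at_ tau.2 t)).

Definition traj_cost (nx nu T : nat) (c : nat -> nx.-tuple R -> nu.-tuple R -> R)
  (cT : nx.-tuple R -> R) (tau : trajectory nx nu) : R :=
  cT (at_ tau.1 T) + \sum_(t < T) c t (at_ tau.1 t) (at_ tau.2 t).

Definition opt_unnorm (nx nu T : nat) (p0 : nx.-tuple R -> R)
  (ptr : nat -> nx.-tuple R -> nu.-tuple R -> nx.-tuple R -> R)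
  (c : nat -> nx.-tuple R -> nu.-tuple R -> R) (cT : nx.-tuple R -> R)
  (tau : trajectory nx nu) : R :=
  p0 (at_ tau.1 0) *
  (\prod_(t < T) ptr t (at_ tau.1 t) (at_ tau.2 t) (at_ tau.1 t.+1)) *
  expR (- traj_cost T c cT tau).

Definition opt_Z (nx nu : nat) (X : set (nx.-tuple R)) (U : set (nu.-tuple R))
  (T : nat) p0 ptr c cT : \bar R :=
  trajI X U T (fun tau => (@opt_unnorm nx nu T p0 ptr c cT tau)%:E).

Definition opt_density (nx nu : nat) (X : set (nx.-tuple R)) (U : set (nu.-tuple R))
  (T : nat) p0 ptr c cT (tau : trajectory nx nu) : R :=
  @opt_unnorm nx nu T p0 ptr c cT tau / fine (opt_Z X U T p0 ptr c cT).

Definition admissible (nx nu : nat) (X : set (nx.-tuple R)) (U : set (nu.-tuple R))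
  (T : nat) (pi : policy nx nu) : Prop :=
  forall t x, (t < T)%N -> X x ->
    (forall u, U u -> 0 <= pi t x u) /\
    lebint_on U (fun u => (pi t x u)%:E) = 1%E.

Definition risk_objective (nx nu : nat) (X : set (nx.-tuple R)) (U : set (nu.-tuple R))
  (T : nat) p0 ptr (c : nat -> nx.-tuple R -> nu.-tuple R -> R) cT (eta : R)
  (pi : policy nx nu) : \bar R :=
  ((eta^-1)%:E *
   lne (trajI X U T (fun tau =>
     (traj_density T p0 ptr pi tau *
      expR (eta * cT (at_ tau.1 T) +
            eta * \sum_(t < T) (c t (at_ tau.1 t) (at_ tau.2 t) +
                                ln (pi t (at_ tau.1 t) (at_ tau.2 t)))))%:E)))%E.

Definition is_minimizer {A : Type} (P : A -> Prop) (F : A -> \bar R) (a : A) : Prop :=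
  P a /\ forall b, P b -> (F a <= F b)%E.

End Defs.

From HB Require Import structures.
From mathcomp Require Import all_boot all_order all_algebra.
From mathcomp Require Import all_classical all_reals all_analysis.
From mathcomp Require Import ring.
Import Order.TTheory GRing.Theory Num.Theory.
Local Open Scope classical_set_scope.
Local Open Scope ring_scope.

(* On a trajectory, p^pi = P Q with P = p(x_0) prod_t p(x_{t+1} | x_t, u_t)
   and Q = prod_t pi_t(u_t | x_t), while p(tau | O) = P exp(-C(tau)) / Z.
   Hence (p^pi)^(1+eta) p(tau | O)^(-eta) = Z^eta p^pi exp(eta C(tau) + eta log Q):
   the integral in the Renyi divergence is Z^eta times the expectation in the
   risk-sensitive objective, so D_(1+eta) = log Z + objective, and the two
   problems differ by the constant log Z.  No measurability is assumed, so the
   homogeneity of the integral is proved from its definition as a supremum of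
   integrals of simple functions. *)

Section integral_scale.
Local Open Scope ereal_scope.
Context d (T : measurableType d) (R : realType) (mu : {measure set T -> \bar R}).
Import HBNNSimple.

Lemma ereal_sup_sintegralZl (f : T -> \bar R) (k : R) : (0 < k)%R ->
  ereal_sup [set sintegral mu h | h in
    [set h : {nnsfun T >-> R} | forall x, (h x)%:E <= k%:E * f x]] =
  k%:E * ereal_sup [set sintegral mu h | h in
    [set h : {nnsfun T >-> R} | forall x, (h x)%:E <= f x]].
Proof.
move=> k0; rewrite -ereal_sup_pZl //; congr ereal_sup.
apply/seteqP; split => y /=.
- case=> h hk <-.
  have k'0 : (0 <= k^-1)%R by rewrite invr_ge0 ltW.
  exists (sintegral mu (scale_nnsfun h k'0)).
    exists (scale_nnsfun h k'0) => // x /=.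
    by rewrite EFinM -(@lee_pmul2l _ k%:E) ?lte_fin // muleA -EFinM divff ?gt_eqF // mul1r.
  rewrite -(sintegralrM mu k); apply: eq_sintegral => x /=.
  by rewrite mulrA divff ?gt_eqF ?mul1r.
- case=> _ [h hf <-] <-.
  exists (scale_nnsfun h (ltW k0)); last by rewrite -(sintegralrM mu k).
  by move=> x /=; rewrite EFinM lee_pmul2l ?lte_fin.
Qed.

Lemma ge0_integralpZl (D : set T) (f : T -> \bar R) (k : R) : (0 < k)%R ->
  (forall x, 0 <= f x) ->
  \int[mu]_(x in D) (k%:E * f x) = k%:E * \int[mu]_(x in D) f x.
Proof.
move=> k0 f0; rewrite ge0_integralE => [|x _]; last first.
  by rewrite mule_ge0 // lee_fin ltW.
by rewrite ge0_integralE // erestrict_scale ereal_sup_sintegralZl.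
Qed.

Lemma integralZl_nneg (D : set T) (f : T -> \bar R) (k : R) : (0 <= k)%R ->
  \int[mu]_(x in D) (k%:E * f x) = k%:E * \int[mu]_(x in D) f x.
Proof.
rewrite le_eqVlt => /predU1P[<-|k0].
  by under eq_integral do rewrite mul0e; rewrite integral0 mul0e.
rewrite integralE [in RHS]integralE ge0_funeposM ?ge0_funenegM ?ltW //.
rewrite !ge0_integralpZl //.
have := @integral_ge0 _ _ _ mu D f^\+ (fun x _ => funepos_ge0 f x).
have := @integral_ge0 _ _ _ mu D f^\- (fun x _ => funeneg_ge0 f x).
case: (\int[mu]_(x in D) f^\+ x) => [a| |];
  case: (\int[mu]_(x in D) f^\- x) => [b| |] //= _ _.
- by rewrite -!EFinM -!EFinD mulrDr mulrN.
all: by rewrite gt0_muley ?lte_fin // ?addeNy ?gt0_muleNy ?lte_fin.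
Qed.

End integral_scale.

Section lebint_scale.
Local Open Scope ereal_scope.
Context {R : realType}.

Lemma lebintZl n (f : n.-tuple R -> \bar R) (k : R) : (0 <= k)%R ->
  lebint (fun v => k%:E * f v) = k%:E * lebint f.
Proof.
move=> k0; elim: n f => [//|n IHn] f /=.
by under eq_integral do rewrite IHn; rewrite integralZl_nneg.
Qed.

Lemma lebint_onZl n (A : set (n.-tuple R)) f (k : R) : (0 <= k)%R ->
  lebint_on A (fun v => k%:E * f v) = k%:E * lebint_on A f.
Proof.
by move=> k0; rewrite /lebint_on -lebintZl //; under eq_fun do rewrite muleCA.
Qed.

Lemma eq_lebint_on n (A : set (n.-tuple R)) f g :
  {in A, f =1 g} -> lebint_on A f = lebint_on A g.
Proof.
move=> fg; rewrite /lebint_on; congr lebint; apply: funext => v.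
by have [/fg->|/negbTE Av] := boolP (v \in A); rewrite // indicE Av !mul0e.
Qed.

End lebint_scale.

Section trajectory_integral.
Local Open Scope ereal_scope.
Context {R : realType} {S Cn : eqType}.
Variables (intX : (S -> \bar R) -> \bar R) (intU : (Cn -> \bar R) -> \bar R).

Definition traj_valid (PX : set S) (PU : set Cn) (t : nat) (tau : seq S * seq Cn) :=
  [/\ size tau.1 = t.+1, size tau.2 = t, {subset tau.1 <= PX} & {subset tau.2 <= PU}].

Lemma eq_traj_int (PX : set S) (PU : set Cn) :
  (forall f g, {in PX, f =1 g} -> intX f = intX g) ->
  (forall f g, {in PU, f =1 g} -> intU f = intU g) ->
  forall t F G, (forall tau, traj_valid PX PU t tau -> F tau = G tau) ->
  traj_int intX intU t F = traj_int intX intU t G.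
Proof.
move=> eqX eqU; elim=> [|t IHt] F G FG /=.
  by apply: eqX => x PXx; apply: FG; split => // y; rewrite /= inE => /eqP->.
apply: IHt => -[xs us] [/= sxs sus PXxs PUus].
apply: eqU => u PUu; apply: eqX => x PXx; apply: FG; split => /=.
- by rewrite size_rcons sxs.
- by rewrite size_rcons sus.
- by move=> y; rewrite mem_rcons inE => /predU1P[->|/PXxs].
- by move=> v; rewrite mem_rcons inE => /predU1P[->|/PUus].
Qed.

Lemma traj_intZl :
  (forall f (k : R), (0 <= k)%R -> intX (fun x => k%:E * f x) = k%:E * intX f) ->
  (forall f (k : R), (0 <= k)%R -> intU (fun u => k%:E * f u) = k%:E * intU f) ->
  forall t F (k : R), (0 <= k)%R ->
  traj_int intX intU t (fun tau => k%:E * F tau) = k%:E * traj_int intX intU t F.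
Proof.
move=> ZX ZU; elim=> [|t IHt] F k k0 /=; first exact: ZX.
rewrite -IHt //; congr traj_int; apply: funext => tau.
by rewrite -ZU //; congr intU; apply: funext => u; rewrite ZX.
Qed.

End trajectory_integral.

Section real_identities.
Context {R : realType}.

Lemma ln_prod (I : finType) (P : pred I) (F : I -> R) :
  (forall i, P i -> 0 <= F i) -> 0 < \prod_(i | P i) F i ->
  ln (\prod_(i | P i) F i) = \sum_(i | P i) ln (F i).
Proof.
move=> F_ge0 prod_gt0.
have F_gt0 i : P i -> 0 < F i.
  move=> Pi; rewrite lt0r F_ge0 // andbT; apply: contraTneq prod_gt0 => Fi0.
  by rewrite (bigD1 i) //= Fi0 mul0r ltxx.
suff [] : 0 < \prod_(i | P i) F i /\ ln (\prod_(i | P i) F i) = \sum_(i | P i) ln (F i)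
  by [].
apply: (big_ind2 (fun p s => 0 < p /\ ln p = s))
  => [|p1 s1 p2 s2 [p1_gt0 <-] [p2_gt0 <-]|i Pi].
- by rewrite ln1.
- by rewrite mulr_gt0 // lnM.
- by rewrite F_gt0.
Qed.

Lemma renyi_integrand_opt (P Q cost Z eta lnQ : R) :
  0 <= P -> 0 <= Q -> 0 < Z -> (0 < Q -> ln Q = lnQ) ->
  (if 0 < P * Q * (P * expR (- cost) / Z)
   then powR (P * Q) (1 + eta) * powR (P * expR (- cost) / Z) (1 - (1 + eta))
   else 0)
  = powR Z eta * (P * Q * expR (eta * cost + eta * lnQ)).
Proof.
rewrite le_eqVlt => /predU1P[<-|P_gt0]; first by rewrite !mul0r ltxx mulr0.
rewrite le_eqVlt => /predU1P[<-|Q_gt0]; first by rewrite mulr0 !mul0r ltxx mulr0.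
move=> Z_gt0 /(_ Q_gt0) <-.
have PQ_gt0 : 0 < P * Q by rewrite mulr_gt0.
have opt_gt0 : 0 < P * expR (- cost) / Z by rewrite divr_gt0 // mulr_gt0 // expR_gt0.
rewrite ifT ?(mulr_gt0 PQ_gt0) // /powR (gt_eqF PQ_gt0) (gt_eqF opt_gt0) (gt_eqF Z_gt0).
rewrite ln_div ?posrE ?mulr_gt0 ?expR_gt0 // !lnM ?posrE ?expR_gt0 // expRK.
rewrite -[P * Q]lnK ?posrE // lnM ?posrE // -!expRD.
congr expR; ring.
Qed.

Lemma lneZl (k : R) (x : \bar R) : 0 < k -> lne (k%:E * x) = ((ln k)%:E + lne x)%E.
Proof.
move=> k_gt0; case: x => [r| |].
- rewrite -EFinM /=; have [r_le0|r_gt0] := leP r 0.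
    by rewrite pmulr_rle0 // r_le0 addeNy.
  by rewrite ifF ?lnM ?posrE // -?EFinD //; apply/negbTE; rewrite -ltNge mulr_gt0.
- by rewrite gt0_muley ?lte_fin.
- by rewrite gt0_muleNy ?lte_fin // addeNy.
Qed.

End real_identities.

Section renyi_risk.
Context {R : realType} (nx nu T : nat) (X : set (nx.-tuple R)) (U : set (nu.-tuple R)).
Variables (p0 : nx.-tuple R -> R)
  (ptr : nat -> nx.-tuple R -> nu.-tuple R -> nx.-tuple R -> R)
  (c : nat -> nx.-tuple R -> nu.-tuple R -> R) (cT : nx.-tuple R -> R) (eta : R).
Hypothesis p0_ge0 : forall x, X x -> 0 <= p0 x.
Hypothesis ptr_ge0 : forall t x u x', (t < T)%N -> X x -> U u -> X x' -> 0 <= ptr t x u x'.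

Let Z := fine (opt_Z X U T p0 ptr c cT).

Definition risk_integrand (pi : policy nx nu) (tau : trajectory nx nu) : R :=
  traj_density T p0 ptr pi tau *
  expR (eta * cT (at_ tau.1 T) +
        eta * \sum_(t < T) (c t (at_ tau.1 t) (at_ tau.2 t) +
                            ln (pi t (at_ tau.1 t) (at_ tau.2 t)))).

Lemma traj_valid_at (tau : trajectory nx nu) : traj_valid X U T tau ->
  (forall t, (t <= T)%N -> X (at_ tau.1 t)) /\ (forall t, (t < T)%N -> U (at_ tau.2 t)).
Proof.
case=> s1 s2 X1 U2; split => t t_le.
- by rewrite -in_setE; apply/X1/mem_nth; rewrite s1 ltnS.
- by rewrite -in_setE; apply/U2/mem_nth; rewrite s2.
Qed.

Lemma renyi_integrand_traj (pi : policy nx nu) (tau : trajectory nx nu) :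
  0 < Z -> admissible X U T pi -> traj_valid X U T tau ->
  (if 0 < traj_density T p0 ptr pi tau * opt_density X U T p0 ptr c cT tau
   then powR (traj_density T p0 ptr pi tau) (1 + eta) *
        powR (opt_density X U T p0 ptr c cT tau) (1 - (1 + eta))
   else 0) =
  powR Z eta * risk_integrand pi tau.
Proof.
move=> Z_gt0 pi_adm /traj_valid_at[Xx Uu]; rewrite /risk_integrand.
have pi_ge0 (t : 'I_T) : 0 <= pi t (at_ tau.1 t) (at_ tau.2 t).
  exact: (pi_adm t _ (ltn_ord t) (Xx t (ltnW (ltn_ord t)))).1 _ (Uu t (ltn_ord t)).
have dyn_ge0 : 0 <= p0 (at_ tau.1 0) *
    \prod_(t < T) ptr t (at_ tau.1 t) (at_ tau.2 t) (at_ tau.1 t.+1).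
  apply: mulr_ge0; first exact/p0_ge0/Xx.
  apply: prodr_ge0 => t _.
  by apply: ptr_ge0; [|apply/Xx/ltnW|apply/Uu|apply/Xx].
have -> : traj_density T p0 ptr pi tau =
    p0 (at_ tau.1 0) * \prod_(t < T) ptr t (at_ tau.1 t) (at_ tau.2 t) (at_ tau.1 t.+1) *
    \prod_(t < T) pi t (at_ tau.1 t) (at_ tau.2 t).
  by rewrite /traj_density big_split mulrA.
rewrite /opt_density /opt_unnorm -/Z.
rewrite (@renyi_integrand_opt _ _ _ _ _ _
           (\sum_(t < T) ln (pi t (at_ tau.1 t) (at_ tau.2 t)))) ?prodr_ge0 //;
  last exact: ln_prod.
by rewrite big_split /traj_cost !mulrDr addrA.
Qed.

Lemma renyi_opt_densityE (pi : policy nx nu) :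
  (0 < opt_Z X U T p0 ptr c cT)%E -> (opt_Z X U T p0 ptr c cT < +oo)%E -> eta != 0 ->
  admissible X U T pi ->
  renyi (trajI X U T) (1 + eta) (traj_density T p0 ptr pi) (opt_density X U T p0 ptr c cT) =
  ((ln Z)%:E + risk_objective X U T p0 ptr c cT eta pi)%E.
Proof.
move=> Z_pos Z_lty eta_neq0 pi_adm.
have Z_gt0 : 0 < Z by apply: fine_gt0; rewrite Z_pos Z_lty.
rewrite /renyi /risk_objective addrAC subrr add0r /trajI.
rewrite (@eq_traj_int _ _ _ _ _ X U _ _ _ _
  (fun tau => (powR Z eta)%:E * (risk_integrand pi tau)%:E)%E); first last.
- by move=> tau tau_valid; rewrite -EFinM -renyi_integrand_traj //; case: ifP.
- by move=> f g; apply: eq_lebint_on.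
- by move=> f g; apply: eq_lebint_on.
rewrite traj_intZl ?powR_ge0 //; last 2 first.
- by move=> f k; apply: lebint_onZl.
- by move=> f k; apply: lebint_onZl.
by rewrite lneZl ?powR_gt0 // ln_powR muleDr // -EFinM mulrA mulVf // mul1r.
Qed.

End renyi_risk.

Lemma is_minimizer_addl {R : realType} {A : Type} (P : A -> Prop) (F G : A -> \bar R)
    (r : R) :
  (forall a, P a -> F a = (r%:E + G a)%E) ->
  forall a, is_minimizer P F a <-> is_minimizer P G a.
Proof.
move=> FG a; split=> -[Pa a_min]; split=> // b Pb.
all: by have := a_min b Pb; rewrite !FG // leeD2lE.
Qed.

Theorem theorem1 (R : realType) (nx nu T : nat)
  (X : set (nx.-tuple R)) (U : set (nu.-tuple R))
  (p0 : nx.-tuple R -> R)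
  (ptr : nat -> nx.-tuple R -> nu.-tuple R -> nx.-tuple R -> R)
  (c : nat -> nx.-tuple R -> nu.-tuple R -> R) (cT : nx.-tuple R -> R)
  (eta : R) :
  (0 < nx)%N -> (0 < nu)%N -> (0 < T)%N ->
  (0 < lebmeasure U)%E -> (lebmeasure U < +oo)%E ->
  (forall x, X x -> 0 <= p0 x) ->
  lebint_on X (fun x => (p0 x)%:E) = 1%E ->
  (forall t x u, (t < T)%N -> X x -> U u ->
     (forall x', X x' -> 0 <= ptr t x u x') /\
     lebint_on X (fun x' => (ptr t x u x')%:E) = 1%E) ->
  (forall t x u, (t < T)%N -> X x -> U u -> 0 <= c t x u) ->
  (forall x, X x -> 0 <= cT x) ->
  (0 < opt_Z X U T p0 ptr c cT)%E -> (opt_Z X U T p0 ptr c cT < +oo)%E ->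
  -1 < eta -> eta != 0 ->
  forall pi : policy nx nu,
    is_minimizer (admissible X U T)
      (fun pi' => renyi (trajI X U T) (1 + eta)
                    (traj_density T p0 ptr pi')
                    (opt_density X U T p0 ptr c cT)) pi
    <->
    is_minimizer (admissible X U T)
      (risk_objective X U T p0 ptr c cT eta) pi.
Proof.
move=> _ _ _ _ _ p0_ge0 _ ptr_law _ _ Z_gt0 Z_lty _ eta_neq0 pi.
apply: is_minimizer_addl => pi' pi'_adm.
apply: renyi_opt_densityE => // t x u x' t_lt Xx Uu.
exact: (ptr_law t x u t_lt Xx Uu).1.
Qed.
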